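(* In the setting described in the context, the society-wide game has a unique Bayesian equilibrium $x^{soc}$ and the friend game has a unique Bayesian equilibrium $x^{friend}$, given for all $(\theta_i,d_i)\in\Theta\times D$ by $$x^{soc}(\theta_i,d_i)=\frac{\theta_i}{c}+\frac{a\,d_i\,\mathrm{E}[\theta]}{c\,(c-a\,\mathrm{E}[d])},\qquad x^{friend}(\theta_i,d_i)=\frac{\theta_i}{c}+\frac{a\,d_i\,\widetilde{\mathrm{E}}[\theta]}{c\,(c-a\,\widetilde{\mathrm{E}}[d])}.$$
   Context: Fix an integer $n\ge 2$ (number of agents), parameters $a>0$, $c>0$, $\phi\in\mathbb{R}$, and a compact set $\Theta\subset[0,\infty)$ of types. Let $D=\{1,\dots,n-1\}$ (possible degrees). Let $P$ be a probability distribution on $\Theta\times D$, the joint distribution of the type $\theta$ and degree $d$ of a generic potential neighbor, the same for every agent; $\mathrm{E}$ denotes expectation under $P$. The neighbor distribution $\widetilde P$ on $\Theta\times D$ is defined by $\widetilde P(A\times\{d\})=\frac{d}{\mathrm{E}[d]}P(A\times\{d\})$, with expectation $\widetilde{\mathrm{E}}$, so $\widetilde{\mathrm{E}}[h(\theta,d)]=\mathrm{E}[d\,h(\theta,d)]/\mathrm{E}[d]$. Standing assumptions: $P(\theta>0)>0$ and $c>a\,\widetilde{\mathrm{E}}[d]$. A strategy is a bounded measurable function $x:\Theta\times D\to[0,\infty)$, used by all agents. If the others use $x$, an agent of type $\theta_i$ and degree $d_i$ choosing action $y\ge 0$ gets in the society-wide game $EU^{soc}(y;\theta_i,d_i;x)=\theta_i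 y+a\,y\,d_i\,\mathrm{E}[x(\theta,d)]-\frac{c}{2}y^2+\phi(n-1)\mathrm{E}[x(\theta,d)]$, and in the friend game $EU^{friend}(y;\theta_i,d_i;x)=\theta_i y+a\,y\,d_i\,\widetilde{\mathrm{E}}[x(\theta,d)]-\frac{c}{2}y^2+\phi(n-1)\mathrm{E}[x(\theta,d)]$. A Bayesian equilibrium of a game is a strategy $x$ such that for every $(\theta_i,d_i)\in\Theta\times D$, $y=x(\theta_i,d_i)$ maximizes the agent's payoff in that game over $y\ge 0$, given that the others use $x$. *)

From HB Require Import structures.
From mathcomp Require Import all_boot all_order all_algebra.
From mathcomp Require Import all_classical all_reals all_analysis.
Set Implicit Arguments. Unset Strict Implicit. Unset Printing Implicit Defensive.
Import Order.TTheory GRing.Theory Num.Theory.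
Import numFieldNormedType.Exports.
Local Open Scope classical_set_scope.
Local Open Scope ring_scope.

Definition degs (n : nat) : set nat := [set d | (1 <= d <= n.-1)%N].

Section Model.
Context {R : realType}.
Implicit Types (P : probability (R * nat)%type R) (Theta : set R).

(* E[h] for h defined on Theta x D, the expectation under P
   (P is assumed concentrated on Theta x D) *)
Definition Ex P Theta n (h : R * nat -> R) : R :=
  fine (\int[P]_(z in Theta `*` degs n) (h z)%:E).

(* neighbor expectation: tilde E[h] = E[d h] / E[d] *)
Definition Ext P Theta n (h : R * nat -> R) : R :=
  Ex P Theta n (fun z => z.2%:R * h z) / Ex P Theta n (fun z => z.2%:R).

Definition is_strategy Theta n (x : R * nat -> R) : Prop :=
  [/\ measurable_fun (Theta `*` degs n) x,
      (exists M : R, forall z, (Theta `*` degs n) z -> `|x z| <= M) &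
      (forall z, (Theta `*` degs n) z -> 0 <= x z)].

Definition EU_soc P Theta n (a c phi : R) (y th : R) (d : nat) (x : R * nat -> R) : R :=
  th * y + a * y * d%:R * Ex P Theta n x - c / 2 * y ^+ 2
  + phi * (n.-1)%:R * Ex P Theta n x.

Definition EU_friend P Theta n (a c phi : R) (y th : R) (d : nat) (x : R * nat -> R) : R :=
  th * y + a * y * d%:R * Ext P Theta n x - c / 2 * y ^+ 2
  + phi * (n.-1)%:R * Ex P Theta n x.

Definition is_equilibrium Theta n
  (EU : R -> R -> nat -> (R * nat -> R) -> R) (x : R * nat -> R) : Prop :=
  is_strategy Theta n x /\
  forall th d, Theta th -> degs n d ->
    forall y, 0 <= y -> EU y th d x <= EU (x (th, d)) th d x.

Definition soc_equilibrium P Theta n a c phi x :=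
  is_equilibrium Theta n (fun y th d x => EU_soc P Theta n a c phi y th d x) x.
Definition friend_equilibrium P Theta n a c phi x :=
  is_equilibrium Theta n (fun y th d x => EU_friend P Theta n a c phi y th d x) x.

End Model.

From Pilot Require Import Defs.
From HB Require Import structures.
From mathcomp Require Import all_boot all_order all_algebra.
From mathcomp Require Import all_classical all_reals all_analysis.
From mathcomp Require Import ring lra.
Set Implicit Arguments. Unset Strict Implicit. Unset Printing Implicit Defensive.
Import Order.TTheory GRing.Theory Num.Theory.
Import numFieldNormedType.Exports.
Local Open Scope classical_set_scope.
Local Open Scope ring_scope.

(* In both games the payoff of an agent of type th and degree d is
   (th + a d m) y - c/2 y^2 + const, where m is a linear, positive aggregate
   of the strategy x (m = E[x] resp. m = E~[x] = E[d x] / E[d]).  Its unique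
   maximiser over y >= 0 is the best response (th + a d m) / c, so an
   equilibrium is determined by its aggregate m, and applying the aggregate to
   the best response gives the linear fixed-point equation
   c m = M[th] + a m M[d], i.e. m = M[th] / (c - a M[d]).  The condition
   a E~[d] < c makes this solvable in both games, since E[d]^2 <= E[d^2]
   gives E[d] <= E~[d]. *)

Lemma quadratic_argmax (R : realFieldType) (b c v : R) : 0 < c -> 0 <= b ->
  (forall y, 0 <= y -> b * y - c / 2 * y ^+ 2 <= b * v - c / 2 * v ^+ 2) <->
  v = b / c.
Proof.
move=> c_gt0 b_ge0.
have gap y : b * (b / c) - c / 2 * (b / c) ^+ 2 - (b * y - c / 2 * y ^+ 2)
             = c / 2 * (y - b / c) ^+ 2.
  by field; rewrite gt_eqF.
have c2_gt0 : 0 < c / 2 by rewrite divr_gt0.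
split=> [max_v | ->]; last first.
  by move=> y _; rewrite -subr_ge0 gap mulr_ge0 ?sqr_ge0 ?ltW.
have : c / 2 * (v - b / c) ^+ 2 <= 0.
  by rewrite -gap subr_le0 max_v // divr_ge0 // ltW.
rewrite pmulr_rle0 // => sq_le0.
have : (v - b / c) ^+ 2 == 0 by rewrite eq_le sq_le0 sqr_ge0.
by rewrite sqrf_eq0 subr_eq0 => /eqP.
Qed.

Section BoundedMeasurable.
Context {d : measure_display} {T : measurableType d} {R : realType}.
Variable D : set T.

Definition bounded_measurable (f : T -> R) : Prop :=
  measurable_fun D f /\ exists M, forall z, D z -> `|f z| <= M.

Lemma bounded_measurable_cst (r : R) : bounded_measurable (fun _ => r).
Proof. by split; [exact: measurable_cst | exists `|r|]. Qed.

Lemma bounded_measurableD (f g : T -> R) :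
  bounded_measurable f -> bounded_measurable g ->
  bounded_measurable (fun z => f z + g z).
Proof.
move=> [mf [M fM]] [mg [N gN]]; split.
  exact: measurable_realfun.measurable_funD.
exists (M + N) => z Dz.
by rewrite (le_trans (ler_normD _ _)) // lerD ?fM ?gN.
Qed.

Lemma bounded_measurableM (f g : T -> R) :
  bounded_measurable f -> bounded_measurable g ->
  bounded_measurable (fun z => f z * g z).
Proof.
move=> [mf [M fM]] [mg [N gN]]; split.
  exact: measurable_realfun.measurable_funM.
by exists (M * N) => z Dz; rewrite normrM ler_pM ?fM ?gN.
Qed.

Lemma bounded_measurableZ (r : R) (f : T -> R) :
  bounded_measurable f -> bounded_measurable (fun z => r * f z).
Proof. exact/bounded_measurableM/bounded_measurable_cst. Qed.

Lemma bounded_measurable_integrable (P : probability T R) (f : T -> R) :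
  measurable D -> bounded_measurable f -> P.-integrable D (EFin \o f).
Proof.
move=> mD [mf [M fM]]; apply: measurable_bounded_integrable => //.
  by rewrite (le_lt_trans (probability_le1 P mD)) ?ltry.
exists M; split; first exact: num_real.
by move=> y /ltW My z Dz; exact: le_trans (fM z Dz) My.
Qed.

End BoundedMeasurable.

Section Expectations.
Context {R : realType} (n : nat) (Theta : set R) (P : probability (R * nat)%type R).
Local Notation D := (Theta `*` degs n).
Local Notation bm := (@bounded_measurable _ _ R D).
Local Notation Ex := (Ex P Theta n).
Local Notation Ext := (Ext P Theta n).
Hypothesis mD : measurable D.

Lemma bounded_measurable_deg : bm (fun z => z.2%:R).
Proof.
split.
  apply: measurable_funS measurableT _ _ => //.
  by apply: measurableT_comp measurable_snd.
exists n%:R => z [_ /andP[_ z2n]].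
by rewrite ger0_norm // ler_nat (leq_trans z2n) ?leq_pred.
Qed.

Lemma bounded_measurable_fst : compact Theta -> bm (fun z => z.1).
Proof.
move=> /compact_bounded [M [_ TM]]; split.
  by apply: measurable_funS measurableT _ _ => //; exact: measurable_fst.
by exists (M + 1) => z [Tz _]; apply: TM Tz; rewrite ltrDl.
Qed.

Lemma Ex_ext (f g : R * nat -> R) : {in D, f =1 g} -> Ex f = Ex g.
Proof. exact: eq_Rintegral. Qed.

Lemma Ex_ge0 (f : R * nat -> R) : (forall z, D z -> 0 <= f z) -> 0 <= Ex f.
Proof. by move=> f_ge0; apply/fine_ge0/integral_ge0 => z Dz; rewrite lee_fin f_ge0. Qed.

Lemma ExD (f g : R * nat -> R) : bm f -> bm g ->
  Ex (fun z => f z + g z) = Ex f + Ex g.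
Proof. by move=> bf bg; apply: RintegralD => //; apply: bounded_measurable_integrable. Qed.

Lemma ExZ (r : R) (f : R * nat -> R) : bm f -> Ex (fun z => r * f z) = r * Ex f.
Proof. by move=> bf; apply: RintegralZl => //; apply: bounded_measurable_integrable. Qed.

Lemma Ex_cst (r : R) : P D = 1%E -> Ex (fun _ => r) = r.
Proof.
move=> PD1; rewrite /Defs.Ex -/(Rintegral _ _ _) Rintegral_cst //.
have -> : fine (P D) = 1 by rewrite PD1.
by rewrite mulr1.
Qed.

Lemma Ex_deg_ge1 : P D = 1%E -> 1 <= Ex (fun z => z.2%:R).
Proof.
move=> PD1; have : 0 <= Ex (fun z => z.2%:R + (-1)).
  by apply: Ex_ge0 => z [_ /andP[z2_ge1 _]]; rewrite subr_ge0 ler1n.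
rewrite ExD ?Ex_cst ?subr_ge0 //; first exact: bounded_measurable_deg.
exact: bounded_measurable_cst.
Qed.

Lemma Ex_sqr_le (f : R * nat -> R) : P D = 1%E -> bm f ->
  Ex f ^+ 2 <= Ex (fun z => f z * f z).
Proof.
move=> PD1 bf; set m := Ex f.
have : 0 <= Ex (fun z => (f z - m) ^+ 2) by apply: Ex_ge0 => z _; exact: sqr_ge0.
rewrite (@Ex_ext _ (fun z => f z * f z + ((- 2 * m) * f z + m ^+ 2))); last first.
  by move=> z _; ring.
have bmf := bounded_measurableZ (- 2 * m) bf.
have bm1 := @bounded_measurable_cst _ _ _ D (m ^+ 2).
have bff := bounded_measurableM bf bf.
rewrite (ExD bff (bounded_measurableD bmf bm1)) (ExD bmf bm1) (ExZ _ bf) Ex_cst //.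
by rewrite -/m; nra.
Qed.

Lemma Ex_deg_le_Ext_deg : P D = 1%E -> Ex (fun z => z.2%:R) <= Ext (fun z => z.2%:R).
Proof.
move=> PD1; have Ed_gt0 := lt_le_trans ltr01 (Ex_deg_ge1 PD1).
by rewrite /Ext ler_pdivlMr // -expr2 Ex_sqr_le //; exact: bounded_measurable_deg.
Qed.

Lemma Ext_ext (f g : R * nat -> R) : {in D, f =1 g} -> Ext f = Ext g.
Proof. by move=> fg; rewrite /Ext (@Ex_ext _ (fun z => z.2%:R * g z)) // => z /fg ->. Qed.

Lemma Ext_ge0 (f : R * nat -> R) : (forall z, D z -> 0 <= f z) -> 0 <= Ext f.
Proof. by move=> f_ge0; rewrite divr_ge0 ?Ex_ge0 // => z Dz; rewrite mulr_ge0 ?f_ge0. Qed.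

Lemma ExtD (f g : R * nat -> R) : bm f -> bm g ->
  Ext (fun z => f z + g z) = Ext f + Ext g.
Proof.
move=> bf bg; rewrite /Ext -mulrDl -ExD; last 2 first.
- exact: bounded_measurableM bounded_measurable_deg bf.
- exact: bounded_measurableM bounded_measurable_deg bg.
by congr (_ / _); apply: Ex_ext => z _; rewrite mulrDr.
Qed.

Lemma ExtZ (r : R) (f : R * nat -> R) : bm f -> Ext (fun z => r * f z) = r * Ext f.
Proof.
move=> bf; rewrite /Ext mulrA -ExZ; last exact: bounded_measurableM bounded_measurable_deg bf.
by congr (_ / _); apply: Ex_ext => z _; rewrite mulrCA.
Qed.

End Expectations.

Section LinearQuadraticGame.
Context {R : realType} (n : nat) (a c : R) (Theta : set R).
Local Notation D := (Theta `*` degs n).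
Local Notation bm := (@bounded_measurable _ _ R D).
Variables (M K : (R * nat -> R) -> R) (EU : R -> R -> nat -> (R * nat -> R) -> R).
Hypotheses (a_gt0 : 0 < a) (c_gt0 : 0 < c).
Hypotheses (Theta_compact : compact Theta) (Theta_ge0 : Theta `<=` [set t | 0 <= t]).
Hypothesis EUE : forall y th d x,
  EU y th d x = (th + a * d%:R * M x) * y - c / 2 * y ^+ 2 + K x.
Hypothesis M_ext : forall f g, {in D, f =1 g} -> M f = M g.
Hypothesis M_ge0 : forall f, (forall z, D z -> 0 <= f z) -> 0 <= M f.
Hypothesis MD : forall f g, bm f -> bm g -> M (fun z => f z + g z) = M f + M g.
Hypothesis MZ : forall r f, bm f -> M (fun z => r * f z) = r * M f.
Hypothesis aMdeg_lt_c : a * M (fun z => z.2%:R) < c.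

Definition best_response (m : R) (z : R * nat) : R := (z.1 + a * z.2%:R * m) / c.

Definition equilibrium_aggregate : R :=
  M (fun z => z.1) / (c - a * M (fun z => z.2%:R)).

Lemma best_responseE m :
  best_response m = fun z => c^-1 * z.1 + (a * m / c) * z.2%:R.
Proof. by apply/funext => z; rewrite /best_response; field; rewrite gt_eqF. Qed.

Lemma bounded_measurable_best_response m : bm (best_response m).
Proof.
rewrite best_responseE; apply: bounded_measurableD; apply: bounded_measurableZ.
  exact: bounded_measurable_fst.
exact: bounded_measurable_deg.
Qed.

Lemma best_response_ge0 m : 0 <= m -> forall z, D z -> 0 <= best_response m z.
Proof.
move=> m_ge0 z [/Theta_ge0 z1_ge0 _].
apply: divr_ge0 (ltW c_gt0); apply: addr_ge0 z1_ge0 _.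
by rewrite !mulr_ge0 // ltW.
Qed.

Lemma M_best_response m :
  M (best_response m) = (M (fun z => z.1) + a * m * M (fun z => z.2%:R)) / c.
Proof.
rewrite best_responseE MD ?MZ; last 4 first.
- exact: bounded_measurable_fst.
- exact: bounded_measurable_deg.
- exact/bounded_measurableZ/bounded_measurable_fst.
- exact/bounded_measurableZ/bounded_measurable_deg.
by field; rewrite gt_eqF.
Qed.

Lemma equilibrium_is_best_response x :
  is_equilibrium Theta n EU x -> {in D, x =1 best_response (M x)}.
Proof.
move=> [[_ _ x_ge0] x_opt] [th d] /[!inE] -[Tth Dd].
have b_ge0 : 0 <= th + a * d%:R * M x.
  by rewrite (addr_ge0 (Theta_ge0 Tth)) // !mulr_ge0 ?M_ge0 // ltW.
apply/(quadratic_argmax _ c_gt0 b_ge0) => y y_ge0.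
by have := x_opt th d Tth Dd y y_ge0; rewrite !EUE lerD2r.
Qed.

Lemma equilibrium_aggregateP x :
  is_equilibrium Theta n EU x -> M x = equilibrium_aggregate.
Proof.
move=> /equilibrium_is_best_response/M_ext; rewrite M_best_response.
rewrite /equilibrium_aggregate; set Mx := M x; set Md := M (fun z => z.2%:R).
move=> Mx_fix; have gap_neq0 : c - a * Md != 0 by rewrite gt_eqF ?subr_gt0.
have Mx_c : Mx * c = M (fun z => z.1) + a * Mx * Md.
  by rewrite {1}Mx_fix divfK // gt_eqF.
have <- : Mx * (c - a * Md) = M (fun z => z.1) by rewrite mulrBr Mx_c; ring.
by rewrite mulfK.
Qed.

Lemma equilibrium_aggregate_ge0 : 0 <= equilibrium_aggregate.
Proof.
rewrite divr_ge0 // ?subr_ge0 ?(ltW aMdeg_lt_c) //.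
by apply: M_ge0 => z [/Theta_ge0].
Qed.

Lemma best_response_aggregate_equilibrium :
  is_equilibrium Theta n EU (best_response equilibrium_aggregate).
Proof.
have agg_ge0 := equilibrium_aggregate_ge0.
have [mx [B xB]] := bounded_measurable_best_response equilibrium_aggregate.
split; first by split; [| exists B | exact: best_response_ge0].
have M_fix : M (best_response equilibrium_aggregate) = equilibrium_aggregate.
  rewrite M_best_response /equilibrium_aggregate.
  by field; rewrite !gt_eqF ?subr_gt0.
move=> th d Tth Dd y y_ge0; rewrite !EUE lerD2r M_fix.
have b_ge0 : 0 <= th + a * d%:R * equilibrium_aggregate.
  exact: addr_ge0 (Theta_ge0 Tth) (mulr_ge0 (mulr_ge0 (ltW a_gt0) (ler0n _ _)) agg_ge0).
by move: y y_ge0; apply/(quadratic_argmax _ c_gt0 b_ge0).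
Qed.

Lemma linear_quadratic_equilibrium :
  (exists x, is_equilibrium Theta n EU x) /\
  (forall x, is_equilibrium Theta n EU x ->
     forall th d, Theta th -> degs n d ->
       x (th, d) = th / c + a * d%:R * M (fun z => z.1)
                            / (c * (c - a * M (fun z => z.2%:R)))).
Proof.
split; first by exists (best_response equilibrium_aggregate);
  exact: best_response_aggregate_equilibrium.
move=> x x_eq th d Tth Dd.
rewrite (equilibrium_is_best_response x_eq) ?inE //.
rewrite equilibrium_aggregateP // /best_response /equilibrium_aggregate /=.
by field; rewrite !gt_eqF ?subr_gt0.
Qed.

End LinearQuadraticGame.

Theorem lemma3 (R : realType) (n : nat) (a c phi : R) (Theta : set R)
  (P : probability (R * nat)%type R) :
  (2 <= n)%N -> 0 < a -> 0 < c ->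
  compact Theta -> Theta `<=` [set t | 0 <= t] ->
  P (Theta `*` degs n) = 1%E ->
  (0 < P [set z : R * nat | (0 < z.1)%R])%E ->
  a * Ext P Theta n (fun z => z.2%:R) < c ->
  let Eth := Ex P Theta n (fun z => z.1) in
  let Ed := Ex P Theta n (fun z => z.2%:R) in
  let Etth := Ext P Theta n (fun z => z.1) in
  let Etd := Ext P Theta n (fun z => z.2%:R) in
  ((exists x, soc_equilibrium P Theta n a c phi x) /\
   (forall x, soc_equilibrium P Theta n a c phi x ->
      forall th d, Theta th -> degs n d ->
        x (th, d) = th / c + a * d%:R * Eth / (c * (c - a * Ed)))) /\
  ((exists x, friend_equilibrium P Theta n a c phi x) /\
   (forall x, friend_equilibrium P Theta n a c phi x ->
      forall th d, Theta th -> degs n d ->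
        x (th, d) = th / c + a * d%:R * Etth / (c * (c - a * Etd)))).
Proof.
move=> _ a_gt0 c_gt0 Theta_compact Theta_ge0 PD1 _ aEtd_lt_c /=.
have mD : measurable (Theta `*` degs n).
  by apply: measurableX => //; exact: measurable_realfun.compact_measurable.
have aEd_lt_c : a * Ex P Theta n (fun z => z.2%:R) < c.
  by rewrite (le_lt_trans _ aEtd_lt_c) // ler_pM2l // Ex_deg_le_Ext_deg.
pose K x := phi * (n.-1)%:R * Ex P Theta n x.
split.
  apply: (@linear_quadratic_equilibrium _ _ _ _ _ (Ex P Theta n) K
           (fun y th d x => EU_soc P Theta n a c phi y th d x)) => //.
  - by move=> y th d x; rewrite /EU_soc /K; ring.
  - exact: Ex_ext.
  - exact: Ex_ge0.
  - exact: ExD.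
  - exact: ExZ.
apply: (@linear_quadratic_equilibrium _ _ _ _ _ (Ext P Theta n) K
         (fun y th d x => EU_friend P Theta n a c phi y th d x)) => //.
- by move=> y th d x; rewrite /EU_friend /K; ring.
- exact: Ext_ext.
- exact: Ext_ge0.
- exact: ExtD.
- exact: ExtZ.
Qed.
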